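(* Let $\vec K_4$ be the complete digraph on $\{1,2,3,4\}$ (arc $(i,j)$ for all distinct $i,j$). Then $\chi(\partial(\partial(\vec K_4)))\le 3$; explicitly, identifying vertices of $\partial(\partial(\vec K_4))$ with sequences $ijk$ with $i,j,k\in\{1,2,3,4\}$, $i\ne j$, $j\ne k$, the map $c(ijk)=j$ if $j\ne4$ and $c(ijk)=s$ for some $s\in\{1,2,3\}\setminus\{i,k\}$ if $j=4$ is a proper $3$-colouring. Consequently, for every digraph $D$ with $\chi(D)\le 4$, $\chi(\partial(\partial(D)))\le 3$.
   Context: For a digraph $D$ with arc set $A(D)$, $\chi(D)$ is the chromatic number of its underlying graph. $\partial(D)$ has vertex set $A(D)$, with an arc from $(x,y)$ to $(x',y')$ iff $y=x'$. A vertex of $\partial(\partial(\vec K_4))$ is an arc $((i,j),(j,k))$ of $\partial(\vec K_4)$, written $ijk$. *)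

From mathcomp Require Import all_boot.
Set Implicit Arguments. Unset Strict Implicit. Unset Printing Implicit Defensive.

(* A digraph: a vertex type with an arc relation (loops allowed in general;
   a digraph with a loop is not properly colourable). *)
Record digraph := Digraph { dvert : Type; darc : dvert -> dvert -> Prop }.
Arguments darc : clear implicits.

Definition proper_colouring (D : digraph) (C : Type) (c : dvert D -> C) : Prop :=
  forall x y : dvert D, darc D x y -> c x <> c y.

Definition chi_le (D : digraph) (k : nat) : Prop :=
  exists c : dvert D -> 'I_k, proper_colouring c.

Definition line_digraph (D : digraph) : digraph :=
  @Digraph {p : dvert D * dvert D | darc D p.1 p.2}
           (fun a b => (proj1_sig a).2 = (proj1_sig b).1).

(* Complete digraph on {1,2,3,4}, represented by 'I_4 = {0,1,2,3};
   paper's vertex m corresponds to m-1, so paper's vertex 4 is 3. *)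
Definition K4 : digraph := @Digraph 'I_4 (fun i j => i <> j).

Definition DDK4 : digraph := line_digraph (line_digraph K4).

(* A vertex ((i,j),(j,k)) of ∂∂K4, written ijk. *)
Definition v_i (v : dvert DDK4) : 'I_4 := (proj1_sig (proj1_sig v).1).1.
Definition v_j (v : dvert DDK4) : 'I_4 := (proj1_sig (proj1_sig v).1).2.
Definition v_k (v : dvert DDK4) : 'I_4 := (proj1_sig (proj1_sig v).2).2.

Definition four : 'I_4 := ord_max.

Definition explicit_colouring_spec (c : dvert DDK4 -> 'I_4) : Prop :=
  forall v : dvert DDK4,
    (v_j v <> four -> c v = v_j v) /\
    (v_j v = four -> c v <> four /\ c v <> v_i v /\ c v <> v_k v).

From mathcomp Require Import all_boot.
Set Implicit Arguments.
Unset Strict Implicit.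
Unset Printing Implicit Defensive.

(* A proper 4-colouring of D is a homomorphism D -> K4, and the line digraph
   construction is functorial, so every ∂∂D maps homomorphically to ∂∂K4 and
   it suffices to 3-colour ∂∂K4.  There, colour ijk by its middle vertex j
   unless j = 4, in which case use a colour of {1,2,3} missing from {i,k}:
   along an arc ijk -> jkl the middle vertices j <> k differ, and if one of
   them is 4 the other one is an endpoint of the walk avoided by the choice. *)

Definition digraph_hom (D E : digraph) (f : dvert D -> dvert E) : Prop :=
  forall x y : dvert D, darc D x y -> darc E (f x) (f y).

Section Homomorphisms.

Variables (D E : digraph) (f : dvert D -> dvert E).
Hypothesis hom_f : digraph_hom f.

Definition line_map (a : dvert (line_digraph D)) : dvert (line_digraph E) :=
  exist _ (f (proj1_sig a).1, f (proj1_sig a).2) (hom_f (proj2_sig a)).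

Lemma line_map_hom : digraph_hom line_map.
Proof. by move=> a b /= ->. Qed.

Lemma chi_le_hom (k : nat) : chi_le E k -> chi_le D k.
Proof. by case=> c proper_c; exists (c \o f) => x y /hom_f /proper_c. Qed.

End Homomorphisms.

Lemma chi_le_line_digraph2_hom (D E : digraph) (f : dvert D -> dvert E) (k : nat) :
  digraph_hom f -> chi_le (line_digraph (line_digraph E)) k ->
  chi_le (line_digraph (line_digraph D)) k.
Proof. move=> hom_f; exact: (chi_le_hom (line_map_hom (line_map_hom hom_f))). Qed.

Lemma chi_le_narrow (D : digraph) (n : nat) (c : dvert D -> 'I_n.+1) :
  proper_colouring c -> (forall v, c v <> ord_max) -> chi_le D n.
Proof.
move=> proper_c c_max.
have lt_c v : c v < n.
  rewrite ltn_neqAle -ltnS ltn_ord andbT; apply/eqP => cv_n.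
  by apply: (c_max v); apply: val_inj.
exists (fun v => Ordinal (lt_c v)) => x y /proper_c neq_xy eq_xy.
by apply: neq_xy; apply: val_inj; exact: (congr1 val eq_xy).
Qed.

Lemma DDK4_arc (v w : dvert DDK4) :
  darc DDK4 v w ->
  [/\ v_i w = v_j v, v_j w = v_k v & v_j v <> v_k v].
Proof.
rewrite /v_i /v_j /v_k => <-; have mid_v := proj2_sig v.
by split=> //; rewrite mid_v; apply: (proj2_sig (proj1_sig v).2).
Qed.

Section ExplicitColouring.

Variable c : dvert DDK4 -> 'I_4.
Hypothesis c_spec : explicit_colouring_spec c.

Lemma explicit_colouring_avoid_four (v : dvert DDK4) : c v <> four.
Proof.
have [c_mid c_four] := c_spec v.
by case: (eqVneq (v_j v) four) => [/c_four []|/eqP /[dup] j4 /c_mid ->].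
Qed.

Lemma explicit_colouring_proper : proper_colouring c.
Proof.
move=> v w /DDK4_arc [iw jw jk].
have [cv_mid cv_four] := c_spec v; have [cw_mid cw_four] := c_spec w.
case: (eqVneq (v_j v) four) => [j4|/eqP j4].
  have k4 : v_k v <> four by rewrite -j4 => /esym.
  have [_ [_ cv_k]] := cv_four j4.
  by rewrite cw_mid jw // => /esym.
case: (eqVneq (v_k v) four) => [k4|/eqP k4].
  have [_ [cw_i _]] := cw_four (etrans jw k4).
  by rewrite cv_mid // -iw => /esym.
by rewrite cv_mid // cw_mid jw.
Qed.

End ExplicitColouring.

Definition third_colour (i k : 'I_4) : 'I_4 :=
  inord (head 0 [seq s <- iota 0 3 | s \notin [:: nat_of_ord i; nat_of_ord k]]).

Lemma third_colourP (i k : 'I_4) :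
  [/\ third_colour i k != four, third_colour i k != i & third_colour i k != k].
Proof.
by case: i k => [[|[|[|[|?]]]] ?] [[|[|[|[|?]]]] ?] //; rewrite -!val_eqE /= inordK.
Qed.

Definition explicit_colouring (v : dvert DDK4) : 'I_4 :=
  if v_j v == four then third_colour (v_i v) (v_k v) else v_j v.

Lemma explicit_colouringP : explicit_colouring_spec explicit_colouring.
Proof.
move=> v; rewrite /explicit_colouring; split=> [/eqP/negbTE -> //|->].
by rewrite eqxx; case: (third_colourP (v_i v) (v_k v)) => /eqP ? /eqP ? /eqP.
Qed.

Lemma chi_le_DDK4 : chi_le DDK4 3.
Proof.
apply: (@chi_le_narrow _ _ explicit_colouring).
  exact: explicit_colouring_proper explicit_colouringP.
exact: explicit_colouring_avoid_four explicit_colouringP.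
Qed.

Theorem mainTheorem12 :
  chi_le DDK4 3 /\
  (forall c : dvert DDK4 -> 'I_4,
     explicit_colouring_spec c ->
     (forall v, c v <> four) /\ proper_colouring c) /\
  (forall D : digraph, chi_le D 4 -> chi_le (line_digraph (line_digraph D)) 3).
Proof.
split; first exact: chi_le_DDK4.
split.
  move=> c c_spec; split; first exact: explicit_colouring_avoid_four.
  exact: explicit_colouring_proper.
move=> D [g proper_g].
exact: (@chi_le_line_digraph2_hom D K4 g 3 proper_g chi_le_DDK4).
Qed.
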